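(* For every approval-based multi-winner election $\sigma=\langle\mathcal V,\mathcal C,S,B\rangle$ and every non-empty $\mathcal A\subseteq\mathcal C$, there exists a non-empty $\mathcal K\subseteq\mathcal A$ with the following two properties: 1. $\mathrm{Supp}_F(c)=\mathrm{maxMin}(\sigma,\mathcal A)$ for every $F\in\mathfrak F^{\mathrm{opt}}_{\sigma,\mathcal A}$ and every $c\in\mathcal K$; 2. $\displaystyle\mathrm{maxMin}(\sigma,\mathcal A)=\frac{\sum_{y\in2^{\mathcal C}:\,y\cap\mathcal K\neq\emptyset}B(y)}{|\mathcal K|}$.
   Context: An approval-based multi-winner election is a tuple $\sigma=\langle \mathcal V,\mathcal C,S,B\rangle$, where $\mathcal V$ is a finite set of agents, $\mathcal C$ is a finite set of candidates, $1\le S\le|\mathcal C|$ is an integer, and $B:2^{\mathcal C}\to\mathbb N$ gives, for each $\mathcal A\subseteq\mathcal C$, the number $B(\mathcal A)$ of agents whose ballot is exactly $\mathcal A$ (with $\sum_{\mathcal A}B(\mathcal A)\le|\mathcal V|$). For a non-empty $\mathcal A\subseteq\mathcal C$, the family $\mathfrak F_{\sigma,\mathcal A}$ is the set of all $F:2^{\mathcal C}\times\mathcal A\to\mathbb R$ such that: - $F(y,c)\ge0$ for all $y$ and $c$; - $F(y,c)=0$ if $c\notin y$; - $\sum_{c\in\mathcal A\cap y}F(y,c)=B(y)$ whenever $y\cap\mathcal A\neq\emptyset$. We write $\mathrm{Supp}_F(c)=\sum_yF(y,c)$ and $\mathrm{maxMin}(\sigma,\mathcal A)=\sup_{F\in\mathfrak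 F_{\sigma,\mathcal A}}\min_{c\in\mathcal A}\mathrm{Supp}_F(c)$. We also write $\mathfrak F^{\mathrm{opt}}_{\sigma,\mathcal A}=\{F\in\mathfrak F_{\sigma,\mathcal A}:\mathrm{Supp}_F(c)\ge\mathrm{maxMin}(\sigma,\mathcal A)\ \forall c\in\mathcal A\}$. *)

From HB Require Import structures.
From mathcomp Require Import all_boot all_order all_algebra.
Set Implicit Arguments. Unset Strict Implicit. Unset Printing Implicit Defensive.
Import Order.TTheory GRing.Theory Num.Theory.
Local Open Scope ring_scope.

(* An election: agents V (a finType), candidates C (a finType),
   committee size S, ballot counts B : {set C} -> nat. *)
Definition is_election (V C : finType) (S : nat) (B : {set C} -> nat) : Prop :=
  (1 <= S <= #|C|)%N /\ (\sum_(A : {set C}) B A <= #|V|)%N.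

(* The family F_{sigma,A}; F is given as a total function, only its values
   at candidates c \in A matter. *)
Definition in_family (R : realFieldType) (C : finType) (B : {set C} -> nat)
    (A : {set C}) (F : {set C} -> C -> R) : Prop :=
  [/\ forall y c, c \in A -> 0 <= F y c,
      forall (y : {set C}) c, c \in A -> c \notin y -> F y c = 0 &
      forall y, y :&: A != set0 -> \sum_(c in A :&: y) F y c = (B y)%:R].

Definition Supp (R : realFieldType) (C : finType) (F : {set C} -> C -> R) (c : C) : R :=
  \sum_(y : {set C}) F y c.

Definition is_minSupp (R : realFieldType) (C : finType) (A : {set C})
    (F : {set C} -> C -> R) (v : R) : Prop :=
  (exists2 c, c \in A & Supp F c = v) /\ (forall c, c \in A -> v <= Supp F c).

Definition is_maxMin (R : realFieldType) (C : finType) (B : {set C} -> nat)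
    (A : {set C}) (m : R) : Prop :=
  (forall F v, in_family B A F -> is_minSupp A F v -> v <= m) /\
  (forall m', (forall F v, in_family B A F -> is_minSupp A F v -> v <= m') -> m <= m').

Definition in_opt (R : realFieldType) (C : finType) (B : {set C} -> nat)
    (A : {set C}) (m : R) (F : {set C} -> C -> R) : Prop :=
  in_family B A F /\ (forall c, c \in A -> m <= Supp F c).

From HB Require Import structures.
From mathcomp Require Import all_boot all_order all_algebra.
From mathcomp Require Import zify lra.
Set Implicit Arguments. Unset Strict Implicit. Unset Printing Implicit Defensive.
Import Order.TTheory GRing.Theory Num.Theory.
Local Open Scope ring_scope.

(** Let [N K] be the number of ballots meeting [K] and choose a non-empty [K]
    in [A] minimising [N K / #|K|]; call this ratio [m]. Summing supports over
    [K] shows that no admissible [F] can give every candidate of [K] more than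
    [m], and that an [F] giving at least [m] to every candidate of [A] gives
    exactly [m] to each candidate of [K]. Minimality of [K] is Hall's condition
    [#|K'| * m <= N K'] for all [K'] in [A], so a fractional Hall (supply and
    demand) theorem yields an [F] giving at least [m] everywhere on [A]. *)

Lemma bigmin_attained (disp : Order.disp_t) (T : orderType disp) (I : finType)
    (P : pred I) (F : I -> T) (x : T) :
  \big[Order.min/x]_(i | P i) F i = x \/
  exists2 i, P i & \big[Order.min/x]_(i | P i) F i = F i.
Proof.
apply: (big_ind (fun v => v = x \/ exists2 i, P i & v = F i)) => [|a b|i Pi].
- by left.
- by move=> ha hb; case: (leP a b) => _; [exact: ha | exact: hb].
- by right; exists i.
Qed.

Lemma setIS_neq0 (T : finType) (y K K' : {set T}) :
  K' \subset K -> y :&: K' != set0 -> y :&: K != set0.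
Proof. by rewrite !setI_eq0 => sK'K; apply: contra; apply: disjointWr. Qed.

Lemma setI1_neq0 (T : finType) (y : {set T}) c : (y :&: [set c] != set0) = (c \in y).
Proof. by rewrite setI_eq0 disjoint_sym disjoints1 negbK. Qed.

Section Transport.
Variables (R : realFieldType) (C : finType).
Implicit Types (A K y : {set C}) (c : C) (e : R) (w : {set C} -> R) (d : C -> R) (F : {set C} -> C -> R).

Definition meet_weight w K : R := \sum_(y | y :&: K != set0) w y.

(* For integer weights [(B y)%:R] this is exactly [in_family B A]. *)
Definition is_flow A w F : Prop :=
  [/\ forall y c, c \in A -> 0 <= F y c,
      forall y c, c \in A -> c \notin y -> F y c = 0 &
      forall y, y :&: A != set0 -> \sum_(c in A :&: y) F y c = w y].

Definition feasible A w d : Prop :=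
  exists2 F, is_flow A w F & forall c, c \in A -> d c <= Supp F c.

Definition hall_condition A w d : Prop :=
  forall K, K \subset A -> \sum_(c in K) d c <= meet_weight w K.

Definition lower_at (T : eqType) (f : T -> R) (a : T) (e : R) (x : T) : R :=
  f x - (x == a)%:R * e.

Lemma sum_indicator (T : finType) (P : pred T) a (e : R) :
  \sum_(x | P x) (x == a)%:R * e = (P a)%:R * e.
Proof.
have [Pa|nPa] := boolP (P a).
  by rewrite (bigD1 a) //= eqxx big1 ?addr0 // => x /andP[_ /negbTE->]; rewrite mul0r.
by rewrite mul0r big1 // => x Px; case: eqP Px => [->|]; rewrite ?(negbTE nPa) ?mul0r.
Qed.

Lemma sum_lower_at (T : finType) (P : pred T) (f : T -> R) a e :
  \sum_(x | P x) lower_at f a e x = \sum_(x | P x) f x - (P a)%:R * e.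
Proof. by rewrite sumrB sum_indicator. Qed.

Lemma flow_sum A w F y : is_flow A w F ->
  \sum_(c in A :&: y) F y c = if y :&: A != set0 then w y else 0.
Proof.
case=> _ _ Fsum; case: ifPn => [/Fsum //|]; rewrite negbK setIC => /eqP->.
by rewrite big_set0.
Qed.

Lemma sum_Supp_le_meet_weight A w F K : is_flow A w F -> K \subset A ->
  \sum_(c in K) Supp F c <= meet_weight w K.
Proof.
move=> [F_ge0 F0 Fsum] sKA; rewrite /Supp exchange_big /=.
rewrite (bigID (fun y => y :&: K != set0)) /= [X in _ + X]big1 ?addr0; last first.
  move=> y; rewrite negbK setI_eq0 => yK; apply: big1 => c cK.
  by rewrite F0 ?(subsetP sKA) ?(disjointFl yK cK).
apply: ler_sum => y yK; rewrite -Fsum ?(setIS_neq0 sKA yK) //.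
rewrite (big_setID y) /= [X in _ + X]big1 ?addr0; last first.
  by move=> c /setDP[cK cy]; rewrite F0 ?(subsetP sKA).
rewrite [X in _ <= X](big_setID K) /= setIAC (setIidPr sKA) lerDl.
by apply: sumr_ge0 => c /setDP[/setIP[cA _] _]; apply: F_ge0.
Qed.

Lemma meet_weightU w K1 K2 :
  meet_weight w (K1 :|: K2) =
  meet_weight (fun y => if y :&: K2 == set0 then w y else 0) K1 + meet_weight w K2.
Proof.
rewrite /meet_weight (bigID (fun y => y :&: K2 == set0)) /= -big_mkcondr.
by congr (_ + _); apply: eq_bigl => y; rewrite setIUr setU_eq0;
  case: (y :&: K1 == set0); case: (y :&: K2 == set0).
Qed.

Lemma feasible_set0 w d : feasible set0 w d.
Proof.
by exists (fun _ _ => 0) => [|c]; [split=> [y c|y c|y] | ]; rewrite ?inE ?setI0 ?eqxx.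
Qed.

Lemma hall_condition_restrict A K w d : K \subset A -> hall_condition A w d ->
  hall_condition K (fun y => if y :&: K != set0 then w y else 0) d.
Proof.
move=> sKA hall K' sK'K; rewrite /meet_weight (eq_bigr w) => [|y yK'].
  exact: hall (subset_trans sK'K sKA).
by rewrite (setIS_neq0 sK'K yK').
Qed.

Lemma hall_condition_contract A K w d : K \subset A -> hall_condition A w d ->
  meet_weight w K <= \sum_(c in K) d c ->
  hall_condition (A :\: K) (fun y => if y :&: K == set0 then w y else 0) d.
Proof.
move=> sKA hall tight K' sK'.
have K'K : [disjoint K' & K].
  by rewrite disjoints_subset (subset_trans sK') // setDE subsetIr.
have sK'A : K' \subset A := subset_trans sK' (subsetDl A K).
have := hall (K' :|: K); rewrite subUset sK'A sKA meet_weightU => /(_ isT).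
rewrite (eq_bigl [predU K' & K]) ?bigU //= => [|c]; last by rewrite !inE.
lra.
Qed.

Lemma feasible_glue A K w d : K \subset A ->
  feasible K (fun y => if y :&: K != set0 then w y else 0) d ->
  feasible (A :\: K) (fun y => if y :&: K == set0 then w y else 0) d ->
  feasible A w d.
Proof.
move=> sKA [F1 F1flow F1d] [F2 F2flow F2d].
exists (fun y c => if c \in K then F1 y c else F2 y c); last first.
  move=> c cA; rewrite /Supp; case: (boolP (c \in K)) => cK; first exact: F1d.
  by apply: F2d; rewrite inE cK.
have [[F1_ge0 F10 _] [F2_ge0 F20 _]] := (F1flow, F2flow); split.
- by move=> y c cA; case: ifPn => cK; [apply: F1_ge0 | apply: F2_ge0; rewrite inE cK].
- by move=> y c cA; case: ifPn => cK; [apply: F10 | apply: F20; rewrite inE cK].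
move=> y yA; rewrite (big_setID K) /= setIAC (setIidPr sKA) -setIDAC.
rewrite (eq_bigr (F1 y)) => [|c /setIP[-> _] //].
rewrite [X in _ + X](eq_bigr (F2 y)) => [|c /setIP[/setDP[_ /negbTE->] _] //].
rewrite (flow_sum _ F1flow) (flow_sum _ F2flow).
have [yK|yK] := eqVneq (y :&: K) set0; last by rewrite /= if_same addr0.
rewrite /= add0r ifT // setIDA setD_eq0; apply: contra yA => syK.
by rewrite -subset0 -yK subsetI subsetIl.
Qed.

Lemma feasible_setD1 A w d c : (forall y, 0 <= w y) -> c \in A -> d c <= 0 ->
  feasible (A :\ c) w d -> feasible A w d.
Proof.
move=> w_ge0 cA dc_le0 [F Fflow Fd]; have [F_ge0 F0 _] := Fflow.
pose G y x := if x == c then (if (c \in y) && (y :&: (A :\ c) == set0) then w y else 0)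
               else F y x.
exists G; last first.
  move=> x xA; rewrite /Supp /G; case: eqP => [->|/eqP xc]; last by rewrite Fd // !inE xc.
  by rewrite (le_trans dc_le0) // sumr_ge0 // => y _; case: ifP.
split.
- by move=> y x xA; rewrite /G; case: eqP => [_|/eqP xc]; [case: ifP | rewrite F_ge0 // !inE xc].
- move=> y x xA xy; rewrite /G; case: eqP => [xc|/eqP xc]; last by rewrite F0 // !inE xc.
  by rewrite -xc (negbTE xy).
move=> y yA; have [cy|ncy] := boolP (c \in y).
  rewrite (big_setD1 c) ?inE ?cA ?cy //= -setIDAC {1}/G eqxx cy /=.
  rewrite (eq_bigr (F y)) => [|x /setIP[/setD1P[xc _] _]]; last by rewrite /G (negbTE xc).
  by rewrite (flow_sum _ Fflow) setIC; case: ifP; rewrite ?add0r ?addr0.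
have yA' : y :&: (A :\ c) = y :&: A.
  by rewrite setIDA; apply/setDidPl; rewrite disjoint_sym disjoints1 inE (negbTE ncy).
have := flow_sum y Fflow; rewrite yA' yA => <-; apply: eq_big => [x|x /setIP[_ xy]]; last first.
  by rewrite /G; case: eqP xy => // ->; rewrite (negbTE ncy).
by rewrite !inE; case: eqP => // ->; rewrite (negbTE ncy) andbF.
Qed.

Lemma feasible_lower_at A w d y c e : c \in A -> c \in y -> 0 <= e ->
  feasible A (lower_at w y e) (lower_at d c e) -> feasible A w d.
Proof.
move=> cA cy e_ge0 [F Fflow Fd]; have [F_ge0 F0 Fsum] := Fflow.
exists (fun z x => F z x + ((z == y) && (x == c))%:R * e); last first.
  move=> x xA; rewrite /Supp big_split /=; have := Fd x xA; rewrite /lower_at /Supp.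
  have [->|xc] := eqVneq x c; last first.
    rewrite [X in _ <= _ + X]big1 => [|z _]; last by rewrite andbF mul0r.
    by rewrite mul0r subr0 addr0.
  rewrite [X in _ <= _ + X](eq_bigr (fun z => (z == y)%:R * e)) => [|z _]; last by rewrite andbT.
  by rewrite sum_indicator mul1r lerBlDr.
split.
- by move=> z x xA; rewrite addr_ge0 ?F_ge0 ?mulr_ge0.
- move=> z x xA xz; rewrite F0 // add0r; case: eqP => [zy|]; last by rewrite mul0r.
  by case: eqP xz => [->|]; rewrite ?zy ?cy ?mul0r.
- move=> z zA; rewrite big_split /= Fsum // /lower_at.
  have [->|zy] := eqVneq z y; last first.
    by rewrite big1 => [|x _]; rewrite ?mul0r ?subr0 ?addr0.
  by rewrite sum_indicator !inE cA cy mul1r subrK.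
Qed.

Lemma hall_positive_ballot A w d c : hall_condition A w d -> c \in A -> 0 < d c ->
  exists2 y : {set C}, c \in y & 0 < w y.
Proof.
move=> hall cA dc_gt0.
have [y /andP[cy wy_gt0]|no_y] := pickP (fun y : {set C} => (c \in y) && (0 < w y)).
  by exists y.
have := hall [set c]; rewrite sub1set cA big_set1 => /(_ isT) /(lt_le_trans dc_gt0).
rewrite ltNge => /negP[]; apply: sumr_le0 => y; rewrite setI1_neq0 => cy.
by have := no_y y; rewrite /= cy /= leNgt => ->.
Qed.

Lemma hall_lower_at A w d y c e : hall_condition A w d -> c \in y ->
  (forall K, K \subset A -> c \notin K -> y :&: K != set0 ->
     e <= meet_weight w K - \sum_(x in K) d x) ->
  hall_condition A (lower_at w y e) (lower_at d c e).
Proof.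
move=> hall cy e_le K sKA; rewrite /meet_weight !sum_lower_at -/(meet_weight w K).
have := hall K sKA; have [cK|cK] := boolP (c \in K).
  suff -> : y :&: K != set0 by rewrite !mul1r => hK; lra.
  by apply/set0Pn; exists c; rewrite inE cy cK.
have [yK|yK] := boolP (y :&: K != set0); last by rewrite !mul0r !subr0.
by have := e_le K sKA cK yK; rewrite mul1r mul0r subr0 => ? ?; lra.
Qed.

Section Reduction.
Variable A : {set C}.
Hypothesis IH : forall A' w d, (#|A'| < #|A|)%N -> (forall y, 0 <= w y) ->
  hall_condition A' w d -> feasible A' w d.

Lemma feasible_of_tight w d K : (forall y, 0 <= w y) -> hall_condition A w d ->
  K != set0 -> K \proper A -> meet_weight w K <= \sum_(c in K) d c -> feasible A w d.
Proof.
move=> w_ge0 hall K0 KA tight; have sKA := proper_sub KA.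
apply: (feasible_glue sKA); apply: IH.
- exact: proper_card.
- by move=> y; case: ifP.
- exact: hall_condition_restrict sKA hall.
- by rewrite cardsDS // -card_gt0 in K0 *; have := subset_leq_card sKA; lia.
- by move=> y; case: ifP.
- exact: hall_condition_contract sKA hall tight.
Qed.

Lemma feasible_of_nonpos_demand w d c : (forall y, 0 <= w y) -> hall_condition A w d ->
  c \in A -> d c <= 0 -> feasible A w d.
Proof.
move=> w_ge0 hall cA dc_le0; apply: (feasible_setD1 w_ge0 cA dc_le0); apply: IH => //.
  by rewrite (cardsD1 c A) cA.
by move=> K sK; apply: hall; apply: subset_trans sK (subsetDl _ _).
Qed.

End Reduction.

Lemma hall_transfer A w d c y : hall_condition A w d ->
  (forall K, K != set0 -> K \proper A -> \sum_(x in K) d x < meet_weight w K) ->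
  c \in A -> c \in y -> 0 < w y -> 0 < d c ->
  exists2 e, 0 < e <= w y &
    hall_condition A (lower_at w y e) (lower_at d c e) /\
    [\/ e = w y, e = d c | exists K, [/\ K != set0, K \proper A &
       meet_weight (lower_at w y e) K <= \sum_(x in K) lower_at d c e x]].
Proof.
move=> hall strict cA cy wy_gt0 dc_gt0.
pose P K := [&& K \subset A, c \notin K & y :&: K != set0].
pose slack K := meet_weight w K - \sum_(x in K) d x.
pose e := \big[Num.min/Num.min (w y) (d c)]_(K | P K) slack K.
have P_proper K : P K -> (K != set0) && (K \proper A).
  case/and3P=> sKA cK yK; apply/andP; split; first by apply: contraNneq yK => ->; rewrite setI0.
  by rewrite properEneq sKA andbT; apply: contraNneq cK => ->.
have e_gt0 : 0 < e.
  apply/bigmin_gtP; rewrite lt_min wy_gt0 dc_gt0; split=> // K /P_proper/andP[K0 KA].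
  by rewrite subr_gt0 strict.
have e_le_min : e <= Num.min (w y) (d c) by apply: bigmin_le_id.
exists e; first by rewrite e_gt0 (le_trans e_le_min) // ge_min lexx.
split.
  apply: hall_lower_at hall cy _ => K sKA cK yK.
  by apply: bigmin_le_cond; rewrite /P sKA cK yK.
have [|[K PK]] := bigmin_attained P slack (Num.min (w y) (d c)); rewrite -/e.
  by case: leP => _ e_min; [apply: Or31 | apply: Or32].
move=> e_slack; have /andP[K0 KA] := P_proper K PK; case/and3P: PK => _ cK yK.
apply: Or33; exists K; split=> //.
rewrite /meet_weight !sum_lower_at -/(meet_weight w K) yK (negbTE cK) mul1r mul0r subr0.
by rewrite e_slack /slack opprB addrCA subrr addr0.
Qed.

Theorem hall_feasible A w d : (forall y, 0 <= w y) -> hall_condition A w d ->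
  feasible A w d.
Proof.
(* Induction on [#|A|], then on the number of ballots of positive weight: a
   proper tight subset splits the problem, a candidate without demand can be
   removed, and otherwise [hall_transfer] moves weight from a ballot to a
   candidate until one of these happens or the ballot is emptied. *)
have [n] := ubnP #|A|; elim: n => // n IHn in A w d *; rewrite ltnS => leAn.
have {IHn} IH A' w' d' : (#|A'| < #|A|)%N -> (forall y, 0 <= w' y) ->
    hall_condition A' w' d' -> feasible A' w' d'.
  by move=> ltA'A; apply: IHn; apply: leq_trans leAn.
have [k] := ubnP #|[set y | 0 < w y]|; elim: k => // k IHk in w d *.
rewrite ltnS => npos_w w_ge0 hall.
have [->|[c cA]] := set_0Vmem A; first exact: feasible_set0.
have [K /and3P[K0 KA tight]|no_tight] :=
  pickP (fun K => [&& K != set0, K \proper A & meet_weight w K <= \sum_(x in K) d x]).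
  exact: (feasible_of_tight IH w_ge0 hall K0 KA tight).
have [dc_le0|dc_gt0] := lerP (d c) 0.
  exact: (feasible_of_nonpos_demand IH w_ge0 hall cA dc_le0).
have [y cy wy_gt0] := hall_positive_ballot hall cA dc_gt0.
have strict K : K != set0 -> K \proper A -> \sum_(x in K) d x < meet_weight w K.
  by move=> K0 KA; have := no_tight K; rewrite /= K0 KA /= ltNge => ->.
have [e /andP[e_gt0 e_le_wy] [hall' reduced]] := hall_transfer hall strict cA cy wy_gt0 dc_gt0.
have w'_ge0 z : 0 <= lower_at w y e z.
  by rewrite /lower_at subr_ge0; case: eqP => [->|_]; rewrite ?mul1r ?mul0r.
apply: (feasible_lower_at cA cy (ltW e_gt0)).
case: reduced => [e_wy|e_dc|[K [K0 KA tight]]].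
- apply: IHk => //; apply: leq_trans npos_w; apply: proper_card; apply/properP; split.
    apply/subsetP => z; rewrite !inE => /lt_le_trans; apply.
    by rewrite /lower_at lerBlDr lerDl mulr_ge0 // ltW.
  by exists y; rewrite !inE // /lower_at eqxx mul1r e_wy subrr ltxx.
- apply: (feasible_of_nonpos_demand IH w'_ge0 hall' cA).
  by rewrite /lower_at eqxx mul1r e_dc subrr.
- exact: (feasible_of_tight IH w'_ge0 hall' K0 KA tight).
Qed.

Definition ratio w K : R := meet_weight w K / #|K|%:R.

Lemma hall_min_ratio A w K : (forall y, 0 <= w y) ->
  (forall K', K' != set0 -> K' \subset A -> ratio w K <= ratio w K') ->
  hall_condition A w (fun=> ratio w K).
Proof.
move=> w_ge0 Kmin K' sK'A; rewrite sumr_const -mulr_natl.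
have [->|K'0] := eqVneq K' set0; first by rewrite cards0 mul0r sumr_ge0.
by rewrite mulrC -ler_pdivlMr ?ltr0n ?card_gt0 // Kmin.
Qed.

Lemma ratio_ge_Supp A w F K v : is_flow A w F -> K \subset A -> K != set0 ->
  (forall c, c \in A -> v <= Supp F c) -> v <= ratio w K.
Proof.
move=> Fflow sKA K0 v_le; rewrite ler_pdivlMr ?ltr0n ?card_gt0 // mulr_natr -sumr_const.
apply: le_trans (sum_Supp_le_meet_weight Fflow sKA).
by apply: ler_sum => c cK; apply/v_le/(subsetP sKA).
Qed.

Lemma Supp_eq_ratio A w F K : is_flow A w F -> K \subset A ->
  (forall c, c \in A -> ratio w K <= Supp F c) -> forall c, c \in K -> Supp F c = ratio w K.
Proof.
move=> Fflow sKA m_le c cK; apply/eqP; rewrite -subr_eq0; apply/eqP.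
have K0 : K != set0 by apply/set0Pn; exists c.
have Supp_ge x : x \in K -> 0 <= Supp F x - ratio w K.
  by move=> xK; rewrite subr_ge0 m_le ?(subsetP sKA).
apply: (psumr_eq0P Supp_ge) cK; apply/eqP; rewrite eq_le sumr_ge0 // andbT.
rewrite sumrB sumr_const -mulr_natl subr_le0 /ratio mulrC divfK ?pnatr_eq0 -?lt0n ?card_gt0 //.
exact: sum_Supp_le_meet_weight Fflow sKA.
Qed.

End Transport.

Theorem corollary1 (R : realFieldType) (V C : finType) (S : nat)
    (B : {set C} -> nat) (A : {set C}) :
  is_election V S B -> A != set0 ->
  exists m : R, is_maxMin B A m /\
    exists K : {set C},
      [/\ K != set0, K \subset A,
          (forall F c, in_opt B A m F -> c \in K -> Supp F c = m) &
          m = (\sum_(y : {set C} | y :&: K != set0) (B y)%:R) / (#|K|%:R)].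
Proof.
move=> _ A0; pose w y : R := (B y)%:R.
have w_ge0 y : 0 <= w y by rewrite ler0n.
have [K /andP[K0 KA] Kmin] : exists2 K, (K != set0) && (K \subset A) &
    forall K', K' != set0 -> K' \subset A -> ratio w K <= ratio w K'.
  have AA : (A != set0) && (A \subset A) by rewrite A0 subxx.
  case: (@arg_minP _ _ _ A (fun K => (K != set0) && (K \subset A)) (ratio w) AA).
  by move=> K PK Kmin; exists K => // K' K'0 K'A; apply: Kmin; rewrite K'0 K'A.
have [F Fflow Fdem] := hall_feasible w_ge0 (hall_min_ratio w_ge0 Kmin).
exists (ratio w K); split; last first.
  exists K; split=> // F' c [F'flow F'opt]; exact: Supp_eq_ratio F'flow KA F'opt c.
split=> [F' v F'flow [_ v_le] | m' m'_ge].
  exact: ratio_ge_Supp F'flow KA K0 v_le.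
have [a aA] := set0Pn _ A0.
case: (arg_minP (Supp F) aA) => c cA c_min.
by apply: le_trans (Fdem c cA) _; apply: m'_ge Fflow _; split; [exists c|].
Qed.
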